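(* Let $P$ be a continuous poset. A persistence module $M$ over $P$ is ephemeral if and only if for all $p\in P$ and all $m\in M_p$ the set $\mathrm{supp}(m)=\{x\in P: x\ge p,\ M(p\le x)(m)\neq0\}$ is meager.
   Context: Let $P$ be a poset. A subset is directed if nonempty and any two elements have an upper bound in it. $x\ll y$ ($x$ way below $y$) means: for every directed $D$ whose supremum exists with $y\le\sup D$, some $d\in D$ satisfies $x\le d$. $P$ is continuous if for each $p$ the set $\{x:x\ll p\}$ is directed with supremum $p$. A subset $S\subseteq P$ is meager if there are no $x,y\in S$ with $x\ll y$. $k$ is a commutative ring with unity; a persistence module over $P$ is a functor $M$ from $P$ (as a category, $p\to q$ iff $p\le q$) to $k$-modules, with internal maps $M(p\le q)$. $M$ is ephemeral if $M(p\le q)=0$ for all $p\ll q$. *)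

From HB Require Import structures.
From mathcomp Require Import all_boot all_order all_algebra.
Set Implicit Arguments. Unset Strict Implicit. Unset Printing Implicit Defensive.
Import Order.TTheory GRing.Theory.
Local Open Scope order_scope.

Section PosetDefs.
Context {disp : Order.disp_t} {P : porderType disp}.

Definition directed (D : P -> Prop) : Prop :=
  (exists x, D x) /\
  (forall x y, D x -> D y -> exists z, D z /\ x <= z /\ y <= z).

Definition is_sup (D : P -> Prop) (s : P) : Prop :=
  (forall x, D x -> x <= s) /\
  (forall u, (forall x, D x -> x <= u) -> s <= u).

Definition way_below (x y : P) : Prop :=
  forall (D : P -> Prop) (s : P), directed D -> is_sup D s -> y <= s ->
    exists d, D d /\ x <= d.

Definition continuous_poset : Prop :=
  forall p : P, directed (fun x => way_below x p) /\
                is_sup (fun x => way_below x p) p.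

Definition meager (S : P -> Prop) : Prop :=
  ~ (exists x y, S x /\ S y /\ way_below x y).

End PosetDefs.

Record pmodule (k : pzRingType) {disp : Order.disp_t} (P : porderType disp) := PModule {
  pm_obj :> P -> lmodType k;
  pm_map : forall p q : P, (p <= q)%O -> {linear pm_obj p -> pm_obj q};
  pm_id : forall (p : P) (h : (p <= p)%O) (m : pm_obj p), pm_map h m = m;
  pm_comp : forall (p q r : P) (hpq : (p <= q)%O) (hqr : (q <= r)%O) (hpr : (p <= r)%O)
              (m : pm_obj p), pm_map hpr m = pm_map hqr (pm_map hpq m)
}.

Definition ephemeral (k : pzRingType) {disp : Order.disp_t} {P : porderType disp}
  (M : pmodule k P) : Prop :=
  forall (p q : P) (h : (p <= q)%O), way_below p q ->
    forall m : M p, pm_map M h m = 0%R.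

Definition supp (k : pzRingType) {disp : Order.disp_t} {P : porderType disp}
  (M : pmodule k P) (p : P) (m : M p) : P -> Prop :=
  fun x => exists h : (p <= x)%O, pm_map M h m <> 0%R.

From HB Require Import structures.
From mathcomp Require Import all_boot all_order all_algebra.
Import Order.TTheory GRing.Theory.

(* If p << q then p and q are both in the support of any m in M_p with nonzero
   image in M_q, so meager supports force ephemerality; conversely, x << y in
   supp(m) would make M(p <= y)(m) = M(x <= y)(M(p <= x)(m)) vanish. Neither
   direction needs continuity of P. *)

Lemma way_below_le {disp : Order.disp_t} {P : porderType disp} {x y : P} :
  way_below x y -> (x <= y)%O.
Proof.
move=> xy; have [|||d [-> //]] := xy (fun z => z = y) y; last by rewrite lexx.
- split; first by exists y.
  by move=> a b -> ->; exists y; rewrite lexx.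
- by split=> [a -> //|u]; apply.
Qed.

Section Support.
Variables (k : pzRingType) (disp : Order.disp_t) (P : porderType disp).
Variable M : pmodule k P.

Lemma supp_source (p : P) (m : M p) : supp m p <-> m <> 0%R.
Proof.
split=> [[h] | m0]; first by rewrite pm_id.
by exists (lexx p); rewrite pm_id.
Qed.

Lemma supp_map (p q : P) (h : (p <= q)%O) (m : M p) :
  pm_map M h m <> 0%R -> supp m q.
Proof. by exists h. Qed.

Lemma ephemeral_supp_meager : ephemeral M -> forall (p : P) (m : M p), meager (supp m).
Proof.
move=> eM p m [x [y [[px mx] [[py my] xy]]]]; apply: my.
by rewrite (pm_comp px (way_below_le xy) py m) eM.
Qed.

Lemma supp_meager_ephemeral :
  (forall (p : P) (m : M p), meager (supp m)) -> ephemeral M.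
Proof.
move=> meagerM p q h pq m; apply/eqP/negPn/negP => /eqP hm0.
apply: (meagerM p m); exists p, q; split; last by split; [exact: supp_map hm0|].
by apply/supp_source => m0; apply: hm0; rewrite m0 linear0.
Qed.

End Support.

Theorem mainTheorem5 (k : comPzRingType) (disp : Order.disp_t) (P : porderType disp)
  (M : pmodule k P) :
  continuous_poset (P := P) ->
  (ephemeral M <-> forall (p : P) (m : M p), meager (supp m)).
Proof.
move=> _; split; [exact: ephemeral_supp_meager | exact: supp_meager_ephemeral].
Qed.
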